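(* Every connected graph $G$ with at least $2$ vertices has a connecting transition set of size $|V(G)|-2$.
   Context: All graphs are finite, simple and undirected. A transition of a graph $G$ is an unordered pair $\{ab,bc\}$ of two distinct edges of $G$ sharing the vertex $b$ (so $a\neq c$); it is written $abc$. A walk in $G$ is a sequence $(v_1,\dots,v_k)$ of vertices with $v_iv_{i+1}\in E(G)$ for all $i\le k-1$; it leads from $v_1$ to $v_k$. For a set $T$ of transitions of $G$, a walk $(v_1,\dots,v_k)$ is $T$-compatible if for every $i\in[1,k-2]$, either $v_i=v_{i+2}$ or $v_iv_{i+1}v_{i+2}\in T$. The graph $G$ is $T$-connected, and $T$ is a connecting transition set of $G$, if for all vertices $u,v$ of $G$ there is a $T$-compatible walk leading from $u$ to $v$. *)

From HB Require Import structures.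
From mathcomp Require Import all_boot.
Set Implicit Arguments. Unset Strict Implicit. Unset Printing Implicit Defensive.

Definition simple_graph (V : finType) (e : rel V) : Prop :=
  symmetric e /\ irreflexive e.

Definition graph_connected (V : finType) (e : rel V) : Prop :=
  forall u v : V, connect e u v.

(* A transition {ab, bc} (written abc, with a <> c) is encoded as the pair
   (b, [set a; c]) : middle vertex and the unordered pair of end vertices.
   This encoding identifies abc and cba, as the unordered pair of edges does. *)
Definition transition (V : finType) := (V * {set V})%type.

Definition is_transition (V : finType) (e : rel V) (t : transition V) : Prop :=
  exists a c : V, [/\ a != c, e a t.1, e t.1 c & t.2 = [set a; c]].

Definition transition_set (V : finType) (e : rel V) (T : {set transition V}) : Prop :=
  forall t, t \in T -> is_transition e t.

(* A walk (v_1, ..., v_k), k >= 1, is represented as x :: p with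
   v_1 = x; it is a walk iff path e x p, and it leads from x to last x p. *)
Definition walk_from_to (V : finType) (e : rel V) (x : V) (p : seq V) (u v : V) : Prop :=
  [/\ x = u, path e x p & last x p = v].

(* T-compatibility of the walk w = x :: p: for every index i (0-based) with
   i+2 < size w, either w_i = w_{i+2} or the transition w_i w_{i+1} w_{i+2}
   belongs to T. (Default element x of nth is irrelevant as indices are in range.) *)
Definition T_compatible (V : finType) (T : {set transition V}) (x : V) (p : seq V) : Prop :=
  let w := x :: p in
  forall i : nat, i.+2 < size w ->
    (nth x w i == nth x w i.+2)
    || ((nth x w i.+1, [set nth x w i; nth x w i.+2]) \in T).

Definition T_connected (V : finType) (e : rel V) (T : {set transition V}) : Prop :=
  forall u v : V, exists (x : V) (p : seq V), walk_from_to e x p u v /\ T_compatible T x p.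

Definition connecting_transition_set (V : finType) (e : rel V) (T : {set transition V}) : Prop :=
  transition_set e T /\ T_connected e T.

From HB Require Import structures.
From mathcomp Require Import all_boot zify.
Set Implicit Arguments. Unset Strict Implicit. Unset Printing Implicit Defensive.

(* Root a breadth-first spanning tree at r and choose a child v2 of r.  For
   every vertex v other than r and v2 allow one transition at its parent p v,
   the one continuing upwards: to p (p v), or to v2 when p v = r.  These
   |V| - 2 transitions make compatible the walk from u to v that climbs the
   tree from u to r, turns around along r v2 r, and descends to v. *)

Section CompatibleWalks.
Variables (V : finType) (T : {set transition V}).

Definition allowed_turn (a b c : V) : bool := (a == c) || ((b, [set a; c]) \in T).

Lemma allowed_turnC a b c : allowed_turn a b c = allowed_turn c b a.
Proof. by rewrite /allowed_turn eq_sym setUC. Qed.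

Lemma allowed_backtrack a b : allowed_turn a b a.
Proof. by rewrite /allowed_turn eqxx. Qed.

Fixpoint compatible_walk (s : seq V) : bool :=
  if s is a :: ((b :: c :: _) as s') then allowed_turn a b c && compatible_walk s'
  else true.

Lemma compatible_walk3 a b c s :
  compatible_walk [:: a, b, c & s] = allowed_turn a b c && compatible_walk [:: b, c & s].
Proof. by []. Qed.

Lemma compatible_walk_nthP x0 s :
  reflect (forall i, i.+2 < size s ->
             allowed_turn (nth x0 s i) (nth x0 s i.+1) (nth x0 s i.+2))
          (compatible_walk s).
Proof.
apply: (iffP idP).
- elim: s => [|a [|b [|c s]] IH] //= /andP [turn_abc compat] [|i] lt_i //.
  exact: IH.
- elim: s => [|a [|b [|c s]] IH] //= turns.
  by rewrite (turns 0) //=; apply: IH => i; apply: (turns i.+1).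
Qed.

Lemma compatible_walkP x p : compatible_walk (x :: p) <-> T_compatible T x p.
Proof. by split=> [/(compatible_walk_nthP x) | /(compatible_walk_nthP x)]. Qed.

Lemma compatible_walk_rev s : compatible_walk s -> compatible_walk (rev s).
Proof.
case: s => [|x0 s] //; set w := x0 :: s.
move=> /(compatible_walk_nthP x0) turns; apply/(compatible_walk_nthP x0) => i.
rewrite size_rev => lt_i; rewrite !nth_rev; try lia.
have -> : size w - i.+1 = (size w - i.+3).+2 by lia.
have -> : size w - i.+2 = (size w - i.+3).+1 by lia.
by rewrite allowed_turnC; apply: turns; lia.
Qed.

Lemma compatible_walk_glue s a b t :
  compatible_walk (s ++ [:: a; b]) -> compatible_walk [:: a, b & t] ->
  compatible_walk (s ++ [:: a, b & t]).
Proof.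
elim: s => [|x s IH] //; rewrite !cat_cons.
case: s IH => [|y [|z s]] IH; rewrite ?cat0s ?cat_cons !compatible_walk3;
  by case/andP=> -> /IH compat /compat.
Qed.

End CompatibleWalks.

Section RootedTree.
Variables (V : finType) (e : rel V) (r : V) (p : V -> V) (depth : V -> nat).
Hypothesis depth_root : depth r = 0.
Hypothesis depth_parent : forall v, v != r -> depth v = (depth (p v)).+1.
Hypothesis parent_edge : forall v, v != r -> e v (p v).

Lemma ancestor_ind (P : V -> Prop) :
  P r -> (forall v, v != r -> P (p v) -> P v) -> forall v, P v.
Proof.
move=> P_r P_parent v; move Edv: (depth v) => n.
elim: n v Edv => [|n IH] v Edv; have [-> //|v_neq_r] := eqVneq v r.
- by move: (depth_parent v_neq_r); rewrite Edv.
- by apply: P_parent => //; apply: IH; move: (depth_parent v_neq_r); rewrite Edv => -[].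
Qed.

Lemma exists_root_child w : w != r -> exists2 v, v != r & p v = r.
Proof.
elim/ancestor_ind: w => [|v v_neq_r IH _]; first by rewrite eqxx.
by have [|/IH] := eqVneq (p v) r; [exists v | ].
Qed.

Lemma grandparent_neq v : v != r -> p v != r -> p (p v) != v.
Proof.
move=> v_neq_r pv_neq_r; apply/eqP => ppv_eq_v.
have := depth_parent v_neq_r; rewrite (depth_parent pv_neq_r) ppv_eq_v; lia.
Qed.

Definition ancestors (v : V) : seq V := traject p (p v) (depth v).

Lemma ancestors_root : ancestors r = [::].
Proof. by rewrite /ancestors depth_root. Qed.

Lemma ancestors_parent v : v != r -> ancestors v = p v :: ancestors (p v).
Proof. by move=> v_neq_r; rewrite /ancestors depth_parent. Qed.

Lemma last_ancestors v : last v (ancestors v) = r.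
Proof.
elim/ancestor_ind: v => [|v v_neq_r IH]; first by rewrite ancestors_root.
by rewrite ancestors_parent.
Qed.

Lemma path_ancestors v : path e v (ancestors v).
Proof.
elim/ancestor_ind: v => [|v v_neq_r IH]; first by rewrite ancestors_root.
by rewrite ancestors_parent //= parent_edge.
Qed.

Hypothesis e_sym : symmetric e.
Variable v2 : V.
Hypothesis v2_neq_r : v2 != r.
Hypothesis parent_v2 : p v2 = r.

(* The vertex following [p v] on the walk [v :: ancestors v] extended by the
   turnaround [r v2 r]. *)
Definition above (v : V) : V := if p v == r then v2 else p (p v).

Definition tree_transition (v : V) : transition V := (p v, [set above v; v]).

Definition tree_transitions : {set transition V} :=
  [set tree_transition v | v in ~: [set r; v2]].

Lemma above_neq v : v != r -> v != v2 -> above v != v.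
Proof.
move=> v_neq_r v_neq_v2; rewrite /above.
case: (eqVneq (p v) r) => [_ | pv_neq_r]; first by rewrite eq_sym.
exact: grandparent_neq.
Qed.

Lemma edge_above v : e (p v) (above v).
Proof.
rewrite /above; case: (eqVneq (p v) r) => [-> | /parent_edge //].
by rewrite e_sym -{1}parent_v2 parent_edge.
Qed.

Lemma tree_transitions_valid : transition_set e tree_transitions.
Proof.
move=> t /imsetP [v]; rewrite !inE negb_or => /andP [v_neq_r v_neq_v2] ->.
exists (above v), v; split=> //; first exact: above_neq.
- by rewrite e_sym edge_above.
- by rewrite e_sym parent_edge.
Qed.

Lemma card_tree_transitions : #|tree_transitions| = #|V| - 2.
Proof.
rewrite card_in_imset.
  by have := cardsC [set r; v2]; rewrite cards2 eq_sym v2_neq_r; lia.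
move=> v w; rewrite !inE !negb_or => /andP [v_neq_r v_neq_v2] _ [pv_eq_pw].
have above_eq : above v = above w by rewrite /above pv_eq_pw.
move/setP/(_ v); rewrite !inE eqxx orbT => /esym /orP [/eqP v_eq_above|/eqP //].
by move: (above_neq v_neq_r v_neq_v2); rewrite above_eq -v_eq_above eqxx.
Qed.

Lemma allowed_turn_above v :
  v != r -> allowed_turn tree_transitions v (p v) (above v).
Proof.
move=> v_neq_r; have [-> | v_neq_v2] := eqVneq v v2.
  by rewrite /above parent_v2 eqxx allowed_backtrack.
apply/orP; right; rewrite setUC.
by apply: imset_f; rewrite !inE negb_or v_neq_r v_neq_v2.
Qed.

Lemma compatible_ascent v :
  compatible_walk tree_transitions (rcons (v :: ancestors v) v2).
Proof.
elim/ancestor_ind: v => [|v v_neq_r IH]; first by rewrite ancestors_root.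
have := allowed_turn_above v_neq_r; rewrite /above ancestors_parent // rcons_cons.
case: (eqVneq (p v) r) IH => [-> | pv_neq_r] IH turn.
  by rewrite ancestors_root /= turn.
by rewrite ancestors_parent // rcons_cons compatible_walk3 in IH *; rewrite turn.
Qed.

Lemma tree_T_connected : T_connected e tree_transitions.
Proof.
move=> u v.
set down := rev (belast v (ancestors v)).
have down_rev : [:: v2, r & down] = rev (rcons (v :: ancestors v) v2).
  by rewrite rev_rcons (lastI v) last_ancestors rev_rcons.
exists u, (ancestors u ++ [:: v2, r & down]); split; first split=> //.
- rewrite cat_path path_ancestors last_ancestors /= -{2}parent_v2 parent_edge //.
  rewrite e_sym -{1}parent_v2 parent_edge //= /down.
  rewrite -(last_ancestors v) rev_path.
  by rewrite (eq_path (e' := e)) ?path_ancestors // => x y; rewrite e_sym.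
- by rewrite last_cat down_rev rev_rcons rev_cons /= last_rcons.
- have ascent_u : u :: ancestors u = rcons (belast u (ancestors u)) r.
    by rewrite (lastI u) last_ancestors.
  apply/compatible_walkP; rewrite -cat_cons ascent_u cat_rcons.
  apply: compatible_walk_glue.
    by rewrite -cat_rcons cats1 -ascent_u compatible_ascent.
  by rewrite compatible_walk3 allowed_backtrack down_rev compatible_walk_rev ?compatible_ascent.
Qed.

Lemma tree_transitions_connecting :
  connecting_transition_set e tree_transitions /\ #|tree_transitions| = #|V| - 2.
Proof.
split; last exact: card_tree_transitions.
by split; [exact: tree_transitions_valid | exact: tree_T_connected].
Qed.

End RootedTree.

Section BreadthFirstTree.
Variables (V : finType) (e : rel V) (r : V).
Hypothesis e_sym : symmetric e.
Hypothesis connect_root : forall v, connect e r v.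

Definition path_of_size (v : V) : pred nat :=
  fun n => [exists s : n.-tuple V, path e r s && (last r s == v)].

Lemma exists_path_of_size v : exists n, path_of_size v n.
Proof.
have /connectP [s e_s last_s] := connect_root v.
by exists (size s); apply/existsP; exists (in_tuple s); rewrite /= e_s last_s eqxx.
Qed.

Definition dist (v : V) : nat := ex_minn (exists_path_of_size v).

Lemma dist_min v s : path e r s -> last r s = v -> dist v <= size s.
Proof.
move=> e_s last_s; rewrite /dist; case: ex_minnP => n _; apply.
by apply/existsP; exists (in_tuple s); rewrite /= e_s last_s eqxx.
Qed.

Lemma dist_path v : exists s, [/\ path e r s, last r s = v & size s = dist v].
Proof.
rewrite /dist; case: ex_minnP => n /existsP [s /andP [e_s /eqP last_s]] _.
by exists s; rewrite size_tuple.
Qed.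

Lemma dist_root : dist r = 0.
Proof. by apply/eqP; rewrite -leqn0 (dist_min (s := [::])). Qed.

Lemma dist_edge v w : e v w -> dist w <= (dist v).+1.
Proof.
move=> e_vw; have [s [e_s last_s size_s]] := dist_path v.
rewrite -size_s -(size_rcons s w).
by apply: dist_min; rewrite ?last_rcons // rcons_path e_s last_s.
Qed.

Lemma exists_bfs_parent v : v != r -> exists w, e v w && (dist v == (dist w).+1).
Proof.
move=> v_neq_r; have [s [e_s last_s size_s]] := dist_path v.
case/lastP: s e_s last_s size_s => [|s x] e_s last_s size_s.
  by rewrite -last_s eqxx in v_neq_r.
rewrite last_rcons in last_s; subst x.
rewrite rcons_path in e_s; case/andP: e_s => e_s e_v.
exists (last r s); rewrite e_sym e_v eqn_leq dist_edge //=.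
by rewrite -size_s size_rcons ltnS dist_min.
Qed.

Definition bfs_parent (v : V) : V :=
  odflt r [pick w | e v w && (dist v == (dist w).+1)].

Lemma bfs_parentP v :
  v != r -> e v (bfs_parent v) && (dist v == (dist (bfs_parent v)).+1).
Proof.
move=> v_neq_r; rewrite /bfs_parent; case: pickP => [w //| no_parent].
by have [w] := exists_bfs_parent v_neq_r; rewrite no_parent.
Qed.

Lemma bfs_parent_edge v : v != r -> e v (bfs_parent v).
Proof. by case/bfs_parentP/andP. Qed.

Lemma dist_bfs_parent v : v != r -> dist v = (dist (bfs_parent v)).+1.
Proof. by case/bfs_parentP/andP=> _ /eqP. Qed.

End BreadthFirstTree.

Theorem corollary2 (V : finType) (e : rel V) :
  simple_graph e -> graph_connected e -> 2 <= #|V| ->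
  exists T : {set transition V},
    connecting_transition_set e T /\ #|T| = #|V| - 2.
Proof.
move=> [e_sym _] e_connected V_ge2.
have /card_gt0P [r _] : 0 < #|V| by lia.
have [w] : exists w, w \in [set~ r] by apply/card_gt0P; rewrite cardsC1; lia.
rewrite !inE => w_neq_r.
have connect_r := e_connected r.
have depth_parent := dist_bfs_parent e_sym connect_r.
have [v2 v2_neq_r parent_v2] := exists_root_child depth_parent w_neq_r.
exists (tree_transitions r (bfs_parent connect_r) v2).
exact: (tree_transitions_connecting (dist_root connect_r) depth_parent
  (bfs_parent_edge e_sym connect_r) e_sym v2_neq_r parent_v2).
Qed.
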